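(* Let $s=a_1a_2\cdots a_n$ be a permutation of $[n]$ in one-line form, and let $\bar s=(0,a_1,a_2,\ldots,a_n)$ and $p_t=(n,n-1,\ldots,1,0)$, both $(n+1)$-cycles on $[n]^*=\{0,1,\ldots,n\}$. Then $$td(s)\ \ge\ \max_{\gamma}\ \frac{\max\{|C(p_t\bar s\gamma)-C(\gamma)|,\ |C_{odd}(p_t\bar s\gamma)-C_{odd}(\gamma)|,\ |C_{ev}(p_t\bar s\gamma)-C_{ev}(\gamma)|\}}{2},$$ where $\gamma$ ranges over all permutations of $[n]^*$.
   Context: Permutations are multiplied as composition of maps, $(\sigma\tau)(x)=\sigma(\tau(x))$. For a permutation $\pi$, $C(\pi)$, $C_{odd}(\pi)$ and $C_{ev}(\pi)$ denote the number of cycles, of odd-length cycles and of even-length cycles of $\pi$ (fixed points counted as cycles of length $1$). A transposition acting on a sequence $a_1\cdots a_n$ replaces it by $a_1\cdots a_{i-1}a_{j+1}\cdots a_k a_i\cdots a_j a_{k+1}\cdots a_n$ for some $1\le i\le j<k\le n$ (interchanging two adjacent blocks). The transposition distance $td(s)$ is the minimum number of transpositions needed to transform $s$ into $e_n=12\cdots n$. *)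

From mathcomp Require Import all_boot all_order all_algebra all_fingroup.
Set Implicit Arguments. Unset Strict Implicit. Unset Printing Implicit Defensive.

(* A transposition on a sequence a_1 ... a_n with 1 <= i <= j < k <= n:
   a_1..a_{i-1} a_{j+1}..a_k a_i..a_j a_{k+1}..a_n  (positions 1-based). *)
Definition transp (s : seq nat) (i j k : nat) : seq nat :=
  take i.-1 s ++ drop j (take k s) ++ drop i.-1 (take j s) ++ drop k s.

Definition valid_transp (n i j k : nat) : bool :=
  [&& 1 <= i, i <= j, j < k & k <= n].

(* [sortable_in s m]: s can be transformed into e_n = 1 2 ... n (n = size s)
   by a sequence of exactly m transpositions.  td(s) is the least such m. *)
Fixpoint sortable_in (s : seq nat) (m : nat) : Prop :=
  match m with
  | 0 => s = iota 1 (size s)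
  | m'.+1 => exists i j k, valid_transp (size s) i j k /\ sortable_in (transp s i j k) m'
  end.

Definition is_cycle_of (m : nat) (L : seq nat) (p : {perm 'I_m}) : Prop :=
  perm_eq L (iota 0 m) /\
  forall (i : nat) (x : 'I_m), i < m -> val x = nth 0 L i ->
    val (p x) = nth 0 L (i.+1 %% m).

(* cycle counts; fixed points count as cycles of length 1 *)
Definition ncycles (T : finType) (p : {perm T}) : nat := #|porbits p|.
Definition ncycles_odd (T : finType) (p : {perm T}) : nat :=
  #|[set c in porbits p | odd #|c|]|.
Definition ncycles_even (T : finType) (p : {perm T}) : nat :=
  #|[set c in porbits p | ~~ odd #|c|]|.

From mathcomp Require Import all_boot all_order all_algebra all_fingroup.
From mathcomp Require Import zify.
Import GRing.Theory Num.Theory.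
Set Implicit Arguments. Unset Strict Implicit. Unset Printing Implicit Defensive.

(* A block transposition of s alters the cycle sbar = (0 a_1 ... a_n) at only
   three points, and it remains an (n+1)-cycle, so it keeps its sign.  Hence
   each transposition replaces g * sbar * pt by a permutation of the same sign
   agreeing with it off three points.  Such a change moves C, C_odd and C_ev by
   at most 2: the cycles avoiding the three points are untouched, at most three
   cycles meet them, and the parities of the three counts are determined by the
   sign (C_odd is always congruent to the number of points).  For s = e_n the
   permutation pt inverts sbar, so the three counts start out equal to those
   of g. *)

Section CycleCounts.

Variable T : finType.
Implicit Types (p q : {perm T}) (S : {set T}) (P : pred {set T}).

Definition ncycles_with P p : nat := #|[set c in porbits p | P c]|.

Lemma ncyclesE p : ncycles p = ncycles_with predT p.
Proof. by apply: eq_card => c; rewrite inE andbT. Qed.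

Lemma ncycles_withE P p : ncycles_with P p = \sum_(c in porbits p) P c.
Proof.
rewrite /ncycles_with -sum1_card big_mkcond [RHS]big_mkcond /=.
by apply: eq_bigr => c _; rewrite inE; case: (c \in _); case: (P c).
Qed.

Lemma sum_card_porbits p : \sum_(c in porbits p) #|c| = #|T|.
Proof.
have -> : porbits p = preim_partition (porbit p) [set: T].
  apply/setP => c; apply/imsetP/imsetP => -[x _ ->]; exists x => //;
  by apply/setP => y; rewrite !inE /= eq_porbit_mem porbit_sym.
by rewrite -(card_partition (preim_partitionP (porbit p) [set: T])) cardsT.
Qed.

Lemma odd_ncycles_odd p : odd (ncycles_odd p) = odd #|T|.
Proof.
rewrite -(sum_card_porbits p) [ncycles_odd p]ncycles_withE.
apply: (big_ind2 (fun m k => odd m = odd k)) => [//|m1 k1 m2 k2 E1 E2|c _].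
  by rewrite !oddD E1 E2.
by case: (odd #|c|).
Qed.

Lemma ncycles_odd_even p : ncycles_odd p + ncycles_even p = ncycles p.
Proof.
rewrite /ncycles /ncycles_odd /ncycles_even.
rewrite -[#|porbits p|](cardsID [set c : {set T} | odd #|c|]).
by congr (_ + _); apply: eq_card => c; rewrite !inE // andbC.
Qed.

Lemma odd_ncycles_sign p q : odd_perm p = odd_perm q ->
  [/\ odd (ncycles p) = odd (ncycles q), odd (ncycles_odd p) = odd (ncycles_odd q)
    & odd (ncycles_even p) = odd (ncycles_even q)].
Proof.
rewrite /odd_perm => /addbI Epq.
have Eo : odd (ncycles_odd p) = odd (ncycles_odd q) by rewrite !odd_ncycles_odd.
split=> //; apply: (@addbI (odd (ncycles_odd p))).
by rewrite -oddD ncycles_odd_even Eo -oddD ncycles_odd_even.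
Qed.

Lemma card_porbits_meeting p S :
  #|porbits p :\: [set c : {set T} | [disjoint c & S]]| <= #|S|.
Proof.
apply: leq_trans (leq_imset_card (porbit p) S); apply: subset_leq_card.
apply/subsetP => _ /setDP[/imsetP[x _ ->]]; rewrite inE => /pred0Pn[y /andP[xy yS]].
by apply/imsetP; exists y => //; apply/eqP; rewrite eq_porbit_mem porbit_sym.
Qed.

Section AgreeOff.

Variables (S : {set T}) (p q : {perm T}).
Hypothesis agree : forall x, x \notin S -> p x = q x.

Lemma porbit_agree_off x : [disjoint porbit p x & S] -> porbit q x = porbit p x.
Proof.
move=> dis; have Eiter i : (q ^+ i)%g x = (p ^+ i)%g x.
  elim: i => [|i IH]; first by rewrite !expg0 !perm1.
  by rewrite !expgSr !permM IH agree // (disjointFr dis) ?mem_porbit.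
by apply/setP => y; apply/porbitP/porbitP => -[i ->]; exists i.
Qed.

Lemma porbits_agree_off c :
  c \in porbits p -> [disjoint c & S] -> c \in porbits q.
Proof. by move=> /imsetP[x _ ->] dis; rewrite -(porbit_agree_off dis) imset_f. Qed.

End AgreeOff.

Lemma distn_ncycles_with S p q P : #|S| <= 3 ->
  (forall x, x \notin S -> p x = q x) ->
  odd (ncycles_with P p) = odd (ncycles_with P q) ->
  (`|ncycles_with P p - ncycles_with P q| <= 2)%N.
Proof.
move=> S3 agree; set D := [set c : {set T} | [disjoint c & S]].
have qp x : x \notin S -> q x = p x by move=> /agree.
have Eavoid : [set c in porbits p | P c] :&: D = [set c in porbits q | P c] :&: D.
  apply/setP => c; rewrite !inE -!andbA; apply/and3P/and3P => -[cp Pc dis]; split=> //.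
    exact: (porbits_agree_off agree cp).
  exact: (porbits_agree_off qp cp).
have meet r : #|[set c in porbits r | P c] :\: D| <= 3.
  apply: leq_trans S3; apply: leq_trans (card_porbits_meeting r S).
  by apply/subset_leq_card/setSD/subsetP => c; rewrite inE => /andP[].
rewrite /ncycles_with -(cardsID D [set c in porbits p | P c]).
rewrite -(cardsID D [set c in porbits q | P c]) Eavoid.
move=> /(congr1 nat_of_bool); rewrite -!modn2.
by have := meet p; have := meet q; lia.
Qed.

Definition cycle_dist p q : nat :=
  maxn (maxn `|ncycles p - ncycles q| `|ncycles_odd p - ncycles_odd q|)
       `|ncycles_even p - ncycles_even q|.

Lemma cycle_dist_refl p : cycle_dist p p = 0.
Proof. by rewrite /cycle_dist !distnn. Qed.

Lemma cycle_dist_triangle p q r : cycle_dist p r <= cycle_dist p q + cycle_dist q r.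
Proof.
rewrite /cycle_dist !geq_max -!andbA; apply/and3P; split;
  [apply: leq_trans (leqD_dist _ (ncycles q) _) _
  |apply: leq_trans (leqD_dist _ (ncycles_odd q) _) _
  |apply: leq_trans (leqD_dist _ (ncycles_even q) _) _];
  by apply: leq_add; rewrite !leq_max leqnn ?orbT.
Qed.

Lemma cycle_dist_agree_off S p q : #|S| <= 3 ->
  (forall x, x \notin S -> p x = q x) -> odd_perm p = odd_perm q ->
  cycle_dist p q <= 2.
Proof.
move=> S3 agree /odd_ncycles_sign[]; rewrite !ncyclesE => E E_odd E_even.
by rewrite /cycle_dist !geq_max !ncyclesE !(distn_ncycles_with S3 agree).
Qed.

Lemma cycle_dist_mul_agree_off S g p q r : #|S| <= 3 ->
  (forall x, x \notin S -> p x = q x) -> odd_perm p = odd_perm q ->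
  cycle_dist (g * p * r) (g * q * r) <= 2.
Proof.
move=> S3 agree sign_pq; apply: (@cycle_dist_agree_off (g @^-1: S)).
- by rewrite card_preimset //; apply: perm_inj.
- by move=> x; rewrite inE => Sgx; rewrite !permM agree.
- by rewrite !odd_permM sign_pq.
Qed.

End CycleCounts.

Section Next.

Variables (T : eqType) (x0 : T).
Implicit Types (c X B C : seq T) (x y : T).

Lemma next_infix c x y : uniq c -> infix [:: x; y] c -> next c x = y.
Proof.
move=> uc /infixP[u [v Ec]]; rewrite Ec in uc *.
by rewrite -(next_rot (size u) uc) rot_size_cat /= eqxx.
Qed.

Lemma infix_succ c y : y \in c -> y != last x0 c -> exists z, infix [:: y; z] c.
Proof.
case/splitPr=> u [|z w]; first by rewrite last_cat eqxx.
by exists z; apply: (infix_infix u [:: y; z] w).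
Qed.

Lemma next_swap_blocks X B C y : uniq (X ++ B ++ C) ->
  y \notin [:: last x0 X; last x0 B; last x0 C] ->
  next (X ++ B ++ C) y = next (X ++ C ++ B) y.
Proof.
move=> uXBC; rewrite !inE => /norP[yX /norP[yB yC]].
have permXCB : perm_eq (X ++ C ++ B) (X ++ B ++ C) by rewrite perm_cat2l perm_catC.
have uXCB : uniq (X ++ C ++ B) by rewrite (perm_uniq permXCB).
have [y_in|y_out] := boolP (y \in X ++ B ++ C); last first.
  by rewrite !next_nth (perm_mem permXCB) (negbTE y_out).
have [Z [yZ yZl inf1 inf2]] : exists Z, [/\ y \in Z, y != last x0 Z,
    infix Z (X ++ B ++ C) & infix Z (X ++ C ++ B)].
  move: y_in; rewrite !mem_cat => /or3P[yin|yin|yin]; [exists X|exists B|exists C];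
  split; rewrite ?prefix_infix ?infix_infix ?catA ?suffix_infix //.
have [z yz] := infix_succ yZ yZl.
by rewrite !(next_infix _ (infix_trans yz _)).
Qed.

Lemma next_nth_mod c i : uniq c -> i < size c ->
  next c (nth x0 c i) = nth x0 c (i.+1 %% size c).
Proof.
move=> uc ic; rewrite next_nth mem_nth // index_uniq //.
case: c uc ic => [|y c] //= _ ic; have [lt_ic|->] : i < size c \/ i = size c by lia.
  by rewrite modn_small // (set_nth_default x0).
by rewrite modnn nth_default.
Qed.

End Next.

Lemma transp_blocks s i j k : valid_transp (size s) i j k ->
  exists A B C D, s = A ++ B ++ C ++ D /\ transp s i j k = A ++ C ++ B ++ D.
Proof.
case/and4P=> _ le_ij lt_jk _.
exists (take i.-1 s), (drop i.-1 (take j s)), (drop j (take k s)), (drop k s).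
split; last by [].
have take_cat m l : m <= l -> take l s = take m s ++ drop m (take l s).
  by move=> le_ml; rewrite -{1}(cat_take_drop m (take l s)) take_takel.
have le_ij' : i.-1 <= j by rewrite (leq_trans (leq_pred i)).
rewrite catA catA -(take_cat _ _ le_ij') -(take_cat _ _ (ltnW lt_jk)).
exact/esym/cat_take_drop.
Qed.

Lemma perm_transp s i j k : valid_transp (size s) i j k -> perm_eq (transp s i j k) s.
Proof.
by case/transp_blocks=> [A [B [C [D [-> ->]]]]]; rewrite perm_cat2l perm_catCA.
Qed.

Lemma next_transp s i j k : valid_transp (size s) i j k -> uniq (0 :: s) ->
  exists2 F : seq nat, size F = 3 &
    forall y, y \notin F -> next (0 :: transp s i j k) y = next (0 :: s) y.
Proof.
move=> v us; have perm_t := perm_transp v.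
have ut : uniq (0 :: transp s i j k).
  by rewrite (perm_uniq (_ : perm_eq _ (0 :: s))) // perm_cons.
case/transp_blocks: v us ut => [A [B [C [D [-> ->]]]]] us ut.
(* Rotating both cycles to start at D leaves a common prefix X followed by
   the two swapped blocks. *)
set X := D ++ 0 :: A.
have nextE B' C' : uniq (0 :: A ++ B' ++ C' ++ D) ->
    next (0 :: A ++ B' ++ C' ++ D) =1 next (X ++ B' ++ C').
  have -> : 0 :: A ++ B' ++ C' ++ D = (0 :: A ++ B' ++ C') ++ D by rewrite /= !catA.
  move=> u y; rewrite -(next_rot (size (0 :: A ++ B' ++ C')) u) rot_size_cat.
  by rewrite /X -!catA.
exists [:: last 0 X; last 0 B; last 0 C] => // y yF.
have uXBC : uniq (X ++ B ++ C) by rewrite /X -catA uniq_catC /= -!catA.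
by rewrite (nextE _ _ us) (nextE _ _ ut) (next_swap_blocks uXBC yF).
Qed.

Lemma perm_eq_iota0 L m : perm_eq L (iota 0 m) ->
  [/\ uniq L, size L = m & forall x, (x \in L) = (x < m)].
Proof.
move=> L_iota; rewrite (perm_uniq L_iota) (perm_size L_iota) iota_uniq size_iota.
by split=> // x; rewrite (perm_mem L_iota) mem_iota.
Qed.

Section CycleOf.

Variable m : nat.
Implicit Types (L : seq nat) (p q : {perm 'I_m}).

Lemma is_cycle_of_next L p : is_cycle_of L p -> forall x, val (p x) = next L (val x).
Proof.
move=> [/perm_eq_iota0[uL sizeL memL] pL] x; have xL : val x \in L by rewrite memL ltn_ord.
have iL : index (val x) L < m by rewrite -[X in _ < X]sizeL index_mem.
by rewrite (pL _ x iL) ?nth_index // -{2}(nth_index 0 xL) next_nth_mod ?sizeL.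
Qed.

Lemma exists_cycle_of L : perm_eq L (iota 0 m) -> exists p, is_cycle_of L p.
Proof.
move=> L_iota; have [uL sizeL memL] := perm_eq_iota0 L_iota.
have lt_next (x : 'I_m) : next L (val x) < m by rewrite -memL mem_next memL ltn_ord.
have inj_next : injective (fun x => Ordinal (lt_next x)).
  by move=> x y [/(can_inj (prev_next uL))/val_inj].
exists (perm inj_next); split=> // i x iL xE.
by rewrite permE /= xE next_nth_mod ?sizeL.
Qed.

Lemma ncycles_cycle_of L p : 0 < m -> is_cycle_of L p -> ncycles p = 1.
Proof.
move=> m_gt0 [/perm_eq_iota0[_ sizeL memL] pL].
have L0 : nth 0 L 0 < m by rewrite -memL mem_nth ?sizeL.
pose x0 := Ordinal L0.
have iterE i : i < m -> val ((p ^+ i)%g x0) = nth 0 L i.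
  elim: i => [|i IH] lt_im; first by rewrite expg0 perm1.
  by rewrite expgSr permM (pL i _ (ltnW lt_im) (IH (ltnW lt_im))) modn_small.
have orbit_x0 y : y \in porbit p x0.
  have yL : val y \in L by rewrite memL ltn_ord.
  have iL : index (val y) L < m by rewrite -[X in _ < X]sizeL index_mem.
  have -> : y = (p ^+ index (val y) L)%g x0 by apply: val_inj; rewrite iterE ?nth_index.
  exact: mem_porbit.
rewrite /ncycles (_ : porbits p = [set porbit p x0]) ?cards1 //.
apply/setP => c; rewrite inE; apply/imsetP/eqP => [[y _ ->]|->]; last by exists x0.
by apply/eqP; rewrite eq_porbit_mem.
Qed.

Lemma cycle_of_rev_mul L p q : is_cycle_of L p -> is_cycle_of (rev L) q -> (p * q = 1)%g.
Proof.
move=> pL qL; have [uL _ _] := perm_eq_iota0 pL.1.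
apply/permP => x; apply: val_inj.
by rewrite permM perm1 (is_cycle_of_next qL) (is_cycle_of_next pL) next_rev // prev_next.
Qed.

End CycleOf.

Lemma cycle_dist_transp n (g sbar sbar' pt : {perm 'I_n.+1}) s i j k :
  valid_transp (size s) i j k -> is_cycle_of (0 :: s) sbar ->
  is_cycle_of (0 :: transp s i j k) sbar' ->
  cycle_dist (g * sbar * pt) (g * sbar' * pt) <= 2.
Proof.
move=> v sbarE sbar'E; have [uL _ _] := perm_eq_iota0 sbarE.1.
have [F sizeF nextF] := next_transp v uL.
apply: (@cycle_dist_mul_agree_off _ [set x in map inord F]).
- by rewrite cardsE -sizeF -(size_map (@inord n)) card_size.
- move=> x x_out; apply: val_inj.
  rewrite (is_cycle_of_next sbarE) (is_cycle_of_next sbar'E) nextF //.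
  apply: contra x_out => xF; rewrite inE -[x]inord_val.
  exact: map_f.
- by rewrite /odd_perm -!/(ncycles _) !(ncycles_cycle_of _ sbarE, ncycles_cycle_of _ sbar'E).
Qed.

Lemma cycle_dist_sortable n (g sbar pt : {perm 'I_n.+1}) s k :
  perm_eq s (iota 1 n) -> is_cycle_of (0 :: s) sbar ->
  is_cycle_of (rev (iota 0 n.+1)) pt -> sortable_in s k ->
  cycle_dist (g * sbar * pt) g <= k.*2.
Proof.
move=> + + ptE; elim: k s sbar => [|k IH] s sbar s_iota sbarE /=.
  move=> s_sorted; rewrite s_sorted (perm_size s_iota) size_iota in sbarE.
  by rewrite -mulgA (cycle_of_rev_mul sbarE ptE) mulg1 cycle_dist_refl.
move=> [i [j [l [v sorted_t]]]].
have t_iota : perm_eq (transp s i j l) (iota 1 n) := perm_trans (perm_transp v) s_iota.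
have [sbar' sbar'E] : exists sbar' : {perm 'I_n.+1}, is_cycle_of (0 :: transp s i j l) sbar'.
  by apply: exists_cycle_of; rewrite perm_cons.
apply: leq_trans (cycle_dist_triangle _ (g * sbar' * pt) _) _.
rewrite doubleS -addn2 addnC; apply: leq_add; first exact: IH t_iota sbar'E sorted_t.
exact: cycle_dist_transp v sbarE sbar'E.
Qed.

Theorem theorem1 (n : nat) (s : seq nat) (sbar pt : {perm 'I_n.+1}) (k : nat) :
  perm_eq s (iota 1 n) ->
  is_cycle_of (0 :: s) sbar ->
  is_cycle_of (rev (iota 0 n.+1)) pt ->
  sortable_in s k ->
  ((\max_(g : {perm 'I_n.+1})
      maxn (maxn `|ncycles (g * sbar * pt) - ncycles g|
                 `|ncycles_odd (g * sbar * pt) - ncycles_odd g|)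
           `|ncycles_even (g * sbar * pt) - ncycles_even g|)%N%:R / 2%:R
    <= (k%:R : rat))%R.
Proof.
move=> s_iota sbarE ptE sorted_s.
rewrite ler_pdivrMr ?ltr0n // -natrM ler_nat muln2.
by apply/bigmax_leqP => g _; apply: cycle_dist_sortable sorted_s.
Qed.
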